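(* Let $H$ be a separable infinite-dimensional Hilbert space, $2<p<\infty$, $\varepsilon>0$, and let $\{e_n\}$ be any orthonormal basis of $H$. Then there exists an operator $S\in S_{p+\varepsilon}\setminus S_p$ such that $\{\|Se_n\|\}\in\ell^p$.
   Context: For a compact operator $T$, its singular values $\lambda_1\ge\lambda_2\ge\cdots$ are the positive eigenvalues of $(T^*T)^{1/2}$, repeated according to multiplicity. For $0<p<\infty$, $S_p$ is the set of compact $T$ with $\{\lambda_n\}\in\ell^p$. *)

From Stdlib Require Import Reals Lra List.
Import ListNotations.
Open Scope R_scope.

Record Cpx := mkCpx { cre : R; cim : R }.
Definition C0 : Cpx := mkCpx 0 0.
Definition C1 : Cpx := mkCpx 1 0.
Definition RtoC (r : R) : Cpx := mkCpx r 0.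
Definition Cadd (a b : Cpx) : Cpx := mkCpx (cre a + cre b) (cim a + cim b).
Definition Cmul (a b : Cpx) : Cpx :=
  mkCpx (cre a * cre b - cim a * cim b) (cre a * cim b + cim a * cre b).
Definition Cconj (a : Cpx) : Cpx := mkCpx (cre a) (- cim a).

Record Hilbert := {
  hcar :> Type;
  hzero : hcar;
  hadd : hcar -> hcar -> hcar;
  hopp : hcar -> hcar;
  hscal : Cpx -> hcar -> hcar;
  hinner : hcar -> hcar -> Cpx;
  hadd_assoc : forall x y z, hadd x (hadd y z) = hadd (hadd x y) z;
  hadd_comm : forall x y, hadd x y = hadd y x;
  hadd_0 : forall x, hadd x hzero = x;
  hadd_opp : forall x, hadd x (hopp x) = hzero;
  hscal_1 : forall x, hscal C1 x = x;
  hscal_mul : forall a b x, hscal a (hscal b x) = hscal (Cmul a b) x;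
  hscal_addv : forall a x y, hscal a (hadd x y) = hadd (hscal a x) (hscal a y);
  hscal_adds : forall a b x, hscal (Cadd a b) x = hadd (hscal a x) (hscal b x);
  hinner_add_l : forall x y z, hinner (hadd x y) z = Cadd (hinner x z) (hinner y z);
  hinner_scal_l : forall a x y, hinner (hscal a x) y = Cmul a (hinner x y);
  hinner_conj : forall x y, hinner y x = Cconj (hinner x y);
  hinner_pos : forall x, 0 <= cre (hinner x x);
  hinner_def : forall x, hinner x x = C0 -> x = hzero;
  hcomplete : forall u : nat -> hcar,
    (forall eps, 0 < eps -> exists N, forall m n, (N <= m)%nat -> (N <= n)%nat ->
        sqrt (cre (hinner (hadd (u m) (hopp (u n))) (hadd (u m) (hopp (u n))))) < eps) ->
    exists l, forall eps, 0 < eps -> exists N, forall n, (N <= n)%nat ->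
        sqrt (cre (hinner (hadd (u n) (hopp l)) (hadd (u n) (hopp l)))) < eps
}.

Arguments hzero {h}. Arguments hadd {h}. Arguments hopp {h}.
Arguments hscal {h}. Arguments hinner {h}.

Section Ops.
Variable H : Hilbert.

Definition hsub (x y : H) : H := hadd x (hopp y).
Definition hnorm (x : H) : R := sqrt (cre (hinner x x)).

Fixpoint lincomb (c : nat -> Cpx) (v : nat -> H) (n : nat) : H :=
  match n with
  | O => hzero
  | S k => hadd (lincomb c v k) (hscal (c k) (v k))
  end.

Definition separable : Prop :=
  exists d : nat -> H, forall x eps, 0 < eps -> exists n, hnorm (hsub x (d n)) < eps.

Definition infinite_dimensional : Prop :=
  forall n, exists v : nat -> H, forall c : nat -> Cpx,
    lincomb c v n = hzero -> forall i, (i < n)%nat -> c i = C0.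

Definition orthonormal_basis (e : nat -> H) : Prop :=
  (forall m n, hinner (e m) (e n) = if Nat.eqb m n then C1 else C0) /\
  (forall x, (forall n, hinner x (e n) = C0) -> x = hzero).

Definition linear_op (T : H -> H) : Prop :=
  forall a x y, T (hadd (hscal a x) y) = hadd (hscal a (T x)) (T y).

Definition bounded_op (T : H -> H) : Prop :=
  exists M, forall x, hnorm (T x) <= M * hnorm x.

Definition compact_op (T : H -> H) : Prop :=
  forall x : nat -> H, (exists M, forall n, hnorm (x n) <= M) ->
    exists (phi : nat -> nat) (y : H),
      (forall n, (phi n < phi (S n))%nat) /\
      (forall eps, 0 < eps -> exists N, forall n, (N <= n)%nat ->
          hnorm (hsub (T (x (phi n))) y) < eps).

Definition adjoint_of (T Ts : H -> H) : Prop :=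
  forall x y, hinner (T x) y = hinner x (Ts y).

Definition pos_sqrt_of (A B : H -> H) : Prop :=
  linear_op A /\ (forall x y, hinner (A x) y = hinner x (A y)) /\
  (forall x, 0 <= cre (hinner (A x) x)) /\ (forall x, A (A x) = B x).

Definition orthonormal_eigvecs (A : H -> H) (r : R) (l : list H) : Prop :=
  (forall v, In v l -> A v = hscal (RtoC r) v) /\
  (forall i j, (i < length l)%nat -> (j < length l)%nat ->
     hinner (nth i l hzero) (nth j l hzero) = if Nat.eqb i j then C1 else C0).

(** s is the sequence of positive eigenvalues of A in nonincreasing order,
    repeated according to multiplicity (padded with zeros if finitely many):
    every r > 0 occurs in s exactly dim ker(A - r) times. *)
Definition eigen_seq (A : H -> H) (s : nat -> R) : Prop :=
  (forall n, 0 <= s n) /\ (forall n, s (S n) <= s n) /\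
  (forall r, 0 < r -> forall k : nat,
     (exists idx : list nat, length idx = k /\ NoDup idx /\ Forall (fun n => s n = r) idx)
     <-> (exists l : list H, length l = k /\ orthonormal_eigvecs A r l)).

End Ops.

Arguments hnorm {H}. Arguments separable : clear implicits.
Arguments infinite_dimensional : clear implicits.
Arguments orthonormal_basis {H}. Arguments linear_op {H}. Arguments bounded_op {H}.
Arguments compact_op {H}. Arguments adjoint_of {H}. Arguments pos_sqrt_of {H}.
Arguments eigen_seq {H}.

(** x^p for x >= 0, p > 0 (with 0^p = 0) *)
Definition rpow (x p : R) : R := if Rle_dec x 0 then 0 else Rpower x p.

Definition in_lp (p : R) (a : nat -> R) : Prop :=
  exists M, forall N, sum_f_R0 (fun n => rpow (Rabs (a n)) p) N <= M.

Definition singular_values {H : Hilbert} (T : H -> H) (s : nat -> R) : Prop :=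
  exists Ts A, adjoint_of T Ts /\ pos_sqrt_of A (fun x => Ts (T x)) /\ eigen_seq A s.

Definition in_Sp {H : Hilbert} (p : R) (T : H -> H) : Prop :=
  compact_op T /\ exists s, singular_values T s /\ in_lp p s.

(** Fix an integer
    [q >= 1] with [q^{p/2-1} >= 2], cut the indices into consecutive blocks of lengths
    [q^0, q^1, q^2, ...] and let [f_k] be the normalized sum of the [e_n] over the
    [k]-th block; [(f_k)] is orthonormal.  With weights [c_k = (k+1)^{-1/p}] put
    [S x = sum_k c_k <x,f_k> f_k].
    - [S] is linear, bounded, self-adjoint, positive and compact, and its positive
      eigenvalues are the [c_k], each simple; so its singular values are [(c_k)], and
      [sum_k c_k^{p+eps} = sum_k (k+1)^{-(1+eps/p)} < oo] puts [S] in [S_{p+eps}].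
    - Any singular sequence of [S] dominates [(c_k)], and [sum_k c_k^p] is harmonic,
      so [S] is not in [S_p].
    - For [n] in block [k], [|S e_n| = c_k q^{-k/2}], so block [k] contributes
      [q^k (c_k q^{-k/2})^p <= 2^{-k}] to [sum_n |S e_n|^p]. *)

From Pilot Require Import Defs.
From Stdlib Require Import Reals Lra Lia List Classical ClassicalEpsilon ZArith.
(* Re-import so that [C1] denotes the complex unit, not Stdlib's [C1] class. *)
Import Defs.
Open Scope R_scope.

Lemma Cpx_ext a b : cre a = cre b -> cim a = cim b -> a = b.
Proof. destruct a, b; simpl; intros; subst; reflexivity. Qed.

Ltac Cpx_ring := apply Cpx_ext; simpl; ring.

Definition Copp (a : Cpx) : Cpx := mkCpx (- cre a) (- cim a).

Definition Cnorm2 (a : Cpx) : R := cre a * cre a + cim a * cim a.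

Lemma Cnorm2_ge0 a : 0 <= Cnorm2 a.
Proof. unfold Cnorm2; nra. Qed.

(** * Finite sums with [n] terms, indices [0 .. n-1] *)

Fixpoint rsum (f : nat -> R) (n : nat) : R :=
  match n with O => 0 | S k => rsum f k + f k end.
Fixpoint csum (f : nat -> Cpx) (n : nat) : Cpx :=
  match n with O => C0 | S k => Cadd (csum f k) (f k) end.

Lemma csum_re f n : cre (csum f n) = rsum (fun i => cre (f i)) n.
Proof. induction n as [|n IH]; simpl; [reflexivity|]. now rewrite IH. Qed.
Lemma csum_im f n : cim (csum f n) = rsum (fun i => cim (f i)) n.
Proof. induction n as [|n IH]; simpl; [reflexivity|]. now rewrite IH. Qed.

Lemma rsum_ext f g n : (forall i, (i < n)%nat -> f i = g i) -> rsum f n = rsum g n.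
Proof. induction n as [|n IH]; simpl; intros Hfg; auto. rewrite IH, Hfg; auto. Qed.
Lemma csum_ext f g n : (forall i, (i < n)%nat -> f i = g i) -> csum f n = csum g n.
Proof. induction n as [|n IH]; simpl; intros Hfg; auto. rewrite IH, Hfg; auto. Qed.

Lemma rsum_le f g n : (forall i, (i < n)%nat -> f i <= g i) -> rsum f n <= rsum g n.
Proof.
  induction n as [|n IH]; simpl; intros Hfg; [lra|].
  pose proof (IH (fun i Hi => Hfg i ltac:(lia))). pose proof (Hfg n ltac:(lia)). lra.
Qed.

Lemma rsum_const a n : rsum (fun _ => a) n = INR n * a.
Proof. induction n as [|n IH]; simpl rsum; [simpl; lra|]. rewrite IH, S_INR; lra. Qed.

Lemma rsum_ge0 f n : (forall i, (i < n)%nat -> 0 <= f i) -> 0 <= rsum f n.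
Proof.
  intros Hf. replace 0 with (rsum (fun _ => 0) n) by (rewrite rsum_const; ring).
  now apply rsum_le.
Qed.

Lemma rsum_mono f m n : (forall i, 0 <= f i) -> (m <= n)%nat -> rsum f m <= rsum f n.
Proof. intros Hf Hmn. induction Hmn as [|n _ IH]; simpl; [lra|]. pose proof (Hf n). lra. Qed.

Lemma rsum_scal a f n : rsum (fun i => a * f i) n = a * rsum f n.
Proof. induction n as [|n IH]; simpl; [lra|]. rewrite IH; lra. Qed.

Lemma rsum_split f m k : rsum f (m + k) = rsum f m + rsum (fun i => f (m + i)%nat) k.
Proof.
  induction k as [|k IH]; simpl; [rewrite Nat.add_0_r; lra|].
  rewrite Nat.add_succ_r; simpl. rewrite IH; lra.
Qed.

Lemma rsum_delta f j n : (forall i, i <> j -> f i = 0) ->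
  rsum f n = if Nat.ltb j n then f j else 0.
Proof.
  intros Hf. induction n as [|n IH]; simpl; auto. rewrite IH.
  destruct (Nat.ltb_spec j n), (Nat.ltb_spec j (S n)); try lia.
  - rewrite (Hf n); [lra|lia].
  - replace n with j by lia; lra.
  - rewrite (Hf n); [lra|lia].
Qed.

Lemma csum_delta g j n : (forall i, i <> j -> g i = C0) ->
  csum g n = if Nat.ltb j n then g j else C0.
Proof.
  intros Hg. apply Cpx_ext; rewrite ?csum_re, ?csum_im;
  rewrite (rsum_delta _ j); try (intros i Hi; now rewrite (Hg i Hi));
  destruct (Nat.ltb j n); reflexivity.
Qed.

Lemma rsum_trunc g m n :
  rsum (fun k => if Nat.ltb k n then g k else 0) m = rsum g (Nat.min m n).
Proof.
  induction m as [|m IH]; [reflexivity|]. simpl rsum at 1. rewrite IH.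
  destruct (Nat.ltb_spec m n).
  - replace (Nat.min (S m) n) with (S m) by lia. now replace (Nat.min m n) with m by lia.
  - replace (Nat.min (S m) n) with n by lia. replace (Nat.min m n) with n by lia. lra.
Qed.

Lemma csum_add f g n : csum (fun k => Cadd (f k) (g k)) n = Cadd (csum f n) (csum g n).
Proof. induction n as [|n IH]; simpl; [Cpx_ring|]. rewrite IH. Cpx_ring. Qed.
Lemma csum_cmul a f n : csum (fun k => Cmul a (f k)) n = Cmul a (csum f n).
Proof. induction n as [|n IH]; simpl; [Cpx_ring|]. rewrite IH. Cpx_ring. Qed.
Lemma csum_conj f n : csum (fun k => Cconj (f k)) n = Cconj (csum f n).
Proof. induction n as [|n IH]; simpl; [Cpx_ring|]. rewrite IH. Cpx_ring. Qed.

(** [sum_f_R0 f N] has [N+1] terms. *)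
Lemma sum_f_R0_rsum f N : sum_f_R0 f N = rsum f (S N).
Proof. induction N as [|N IH]; simpl; [lra|]. rewrite IH; simpl; lra. Qed.

Section InnerProduct.
Variable X : Hilbert.
Implicit Types x y z u : X.

Lemma ip_zero_l z : hinner hzero z = C0.
Proof.
  pose proof (hinner_add_l X hzero hzero z) as Hadd. rewrite hadd_0 in Hadd.
  apply Cpx_ext; [apply (f_equal cre) in Hadd | apply (f_equal cim) in Hadd];
  simpl in *; lra.
Qed.

Lemma ip_opp_l x z : hinner (hopp x) z = Copp (hinner x z).
Proof.
  pose proof (hinner_add_l X x (hopp x) z) as Hadd. rewrite hadd_opp, ip_zero_l in Hadd.
  apply Cpx_ext; [apply (f_equal cre) in Hadd | apply (f_equal cim) in Hadd];
  simpl in *; lra.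
Qed.

Lemma ip_conj x y : hinner x y = Cconj (hinner y x).
Proof. apply hinner_conj. Qed.

Lemma ip_add_r z x y : hinner z (hadd x y) = Cadd (hinner z x) (hinner z y).
Proof. rewrite (ip_conj z), (ip_conj z x), (ip_conj z y), hinner_add_l. Cpx_ring. Qed.
Lemma ip_scal_r a z x : hinner z (hscal a x) = Cmul (Cconj a) (hinner z x).
Proof. rewrite (ip_conj z), (ip_conj z x), hinner_scal_l. Cpx_ring. Qed.
Lemma ip_opp_r z x : hinner z (hopp x) = Copp (hinner z x).
Proof. rewrite (ip_conj z), (ip_conj z x), ip_opp_l. Cpx_ring. Qed.
Lemma ip_zero_r z : hinner z hzero = C0.
Proof. rewrite ip_conj, ip_zero_l. Cpx_ring. Qed.

Lemma ip_self_real x : hinner x x = RtoC (cre (hinner x x)).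
Proof.
  pose proof (f_equal cim (hinner_conj X x x)) as Him. simpl in Him.
  apply Cpx_ext; simpl; lra.
Qed.

Lemma hnorm_sq x : hnorm x * hnorm x = cre (hinner x x).
Proof. apply sqrt_sqrt, hinner_pos. Qed.

Lemma hnorm_ge0 x : 0 <= hnorm x.
Proof. apply sqrt_pos. Qed.

Lemma ip_ext (u v : X) : (forall z, hinner u z = hinner v z) -> u = v.
Proof.
  intros Huv. set (d := hadd u (hopp v)).
  assert (Hd : d = hzero).
  { apply hinner_def. unfold d at 1. rewrite hinner_add_l, ip_opp_l, (Huv d). Cpx_ring. }
  transitivity (hadd d v).
  - unfold d. now rewrite <- hadd_assoc, (hadd_comm X (hopp v) v), hadd_opp, hadd_0.
  - now rewrite Hd, hadd_comm, hadd_0.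
Qed.

Lemma ip_ext_r (u v : X) : (forall z, hinner z u = hinner z v) -> u = v.
Proof. intros Huv. apply ip_ext. intros z. now rewrite (ip_conj u), (ip_conj v), Huv. Qed.

Lemma hscal_zero a : hscal a (@hzero X) = hzero.
Proof. apply ip_ext. intros z. rewrite hinner_scal_l, !ip_zero_l. Cpx_ring. Qed.

Fixpoint vsum (v : nat -> X) (n : nat) : X :=
  match n with O => hzero | S k => hadd (vsum v k) (v k) end.

Lemma ip_vsum_l v n z : hinner (vsum v n) z = csum (fun i => hinner (v i) z) n.
Proof. induction n as [|n IH]; simpl; [apply ip_zero_l|]. now rewrite hinner_add_l, IH. Qed.
Lemma ip_vsum_r v n z : hinner z (vsum v n) = csum (fun i => hinner z (v i)) n.
Proof. induction n as [|n IH]; simpl; [apply ip_zero_r|]. now rewrite ip_add_r, IH. Qed.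

Lemma ip_sub_self x y :
  cre (hinner (hsub X x y) (hsub X x y)) <= 2 * cre (hinner x x) + 2 * cre (hinner y y).
Proof.
  pose proof (hinner_pos X (hadd x y)) as Hpos.
  unfold hsub. rewrite hinner_add_l, ip_add_r, ip_add_r in Hpos.
  rewrite hinner_add_l, !ip_opp_l, !ip_add_r, !ip_opp_r. simpl in *.
  rewrite (ip_conj y x) in *. simpl in *. lra.
Qed.

(** A crude substitute for Cauchy-Schwarz, enough for continuity of [<., z>]:
    both components of [<u,z>] are bounded by [|u| (1 + |z|^2) / 2]. *)
Lemma ip_re_bound u z : Rabs (cre (hinner u z)) <= hnorm u * (1 + cre (hinner z z)) / 2.
Proof.
  pose proof (hnorm_ge0 u) as Ht.
  destruct (Req_dec (hnorm u) 0) as [Hu0|Hu0].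
  - assert (Hu : u = hzero).
    { apply hinner_def. rewrite ip_self_real.
      unfold hnorm in Hu0. apply sqrt_eq_0 in Hu0; [|apply hinner_pos].
      rewrite Hu0. Cpx_ring. }
    subst u. rewrite ip_zero_l, Hu0. simpl. rewrite Rabs_R0. lra.
  - set (t := hnorm u) in *.
    pose proof (hinner_pos X (hadd u (hscal (RtoC t) (hopp z)))) as Hm.
    pose proof (hinner_pos X (hadd u (hscal (RtoC t) z))) as Hp.
    rewrite hinner_add_l, !ip_add_r, !hinner_scal_l, !ip_scal_r, ?ip_opp_l, ?ip_opp_r,
      ?hinner_scal_l, ?ip_scal_r in Hm.
    rewrite hinner_add_l, !ip_add_r, !hinner_scal_l, !ip_scal_r in Hp.
    simpl in Hm, Hp. rewrite (ip_conj z u) in Hm, Hp. simpl in Hm, Hp.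
    rewrite (ip_self_real z) in Hm, Hp. simpl in Hm, Hp.
    pose proof (hnorm_sq u) as Hsq. fold t in Hsq. pose proof (hinner_pos X z).
    apply Rabs_le. split; apply Rmult_le_reg_l with (2 * t); nra.
Qed.

Lemma ip_im_bound u z : Rabs (cim (hinner u z)) <= hnorm u * (1 + cre (hinner z z)) / 2.
Proof.
  pose proof (ip_re_bound u (hscal (mkCpx 0 1) z)) as Hb.
  rewrite ip_scal_r, hinner_scal_l, ip_scal_r in Hb. simpl in Hb.
  replace (0 * cre (hinner u z) - - (1) * cim (hinner u z)) with (cim (hinner u z)) in Hb by ring.
  replace (0 * (0 * cre (hinner z z) - - (1) * cim (hinner z z)) -
      1 * (0 * cim (hinner z z) + - (1) * cre (hinner z z))) with (cre (hinner z z)) in Hb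
    by ring.
  exact Hb.
Qed.

Section Linear.
Variable T : X -> X.
Hypothesis T_lin : linear_op T.

Lemma lin_add x y : T (hadd x y) = hadd (T x) (T y).
Proof. rewrite <- (hscal_1 X x) at 1. now rewrite T_lin, hscal_1. Qed.

Lemma lin_zero : T hzero = hzero.
Proof.
  apply ip_ext. intros z. pose proof (f_equal (fun v => hinner v z) (lin_add hzero hzero)) as Hz.
  simpl in Hz. rewrite hadd_0, hinner_add_l in Hz. rewrite ip_zero_l.
  apply Cpx_ext; [apply (f_equal cre) in Hz | apply (f_equal cim) in Hz]; simpl in *; lra.
Qed.

Lemma lin_scal a x : T (hscal a x) = hscal a (T x).
Proof. rewrite <- (hadd_0 X (hscal a x)). now rewrite T_lin, lin_zero, hadd_0. Qed.
End Linear.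

End InnerProduct.
Arguments vsum {X}.

Definition Cconv (u : nat -> Cpx) (l : Cpx) : Prop :=
  Un_cv (fun n => cre (u n)) (cre l) /\ Un_cv (fun n => cim (u n)) (cim l).

Lemma Un_cv_tail u v l N0 : (forall n, (N0 <= n)%nat -> u n = v n) -> Un_cv u l -> Un_cv v l.
Proof.
  intros Huv Hu eps Heps. destruct (Hu eps Heps) as [N HN].
  exists (N + N0)%nat. intros n Hn. rewrite <- Huv by lia. apply HN; lia.
Qed.

Lemma Un_cv_ext u v l : (forall n, u n = v n) -> Un_cv u l -> Un_cv v l.
Proof. intros Huv. apply (Un_cv_tail u v l 0). auto. Qed.

Lemma Un_cv_const a : Un_cv (fun _ => a) a.
Proof. intros eps Heps; exists O; intros. unfold Rdist. now rewrite Rminus_diag, Rabs_R0. Qed.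

Lemma Un_cv_le u l B : Un_cv u l -> (forall n, u n <= B) -> l <= B.
Proof.
  intros Hu Hb. destruct (Rle_dec l B) as [|Hlt]; auto. exfalso.
  destruct (Hu (l - B)) as [N HN]; [lra|]. specialize (HN N (le_n _)). specialize (Hb N).
  unfold Rdist in HN. apply Rabs_def2 in HN. lra.
Qed.

Lemma Un_cv_ge u l B : Un_cv u l -> (forall n, B <= u n) -> B <= l.
Proof.
  intros Hu Hb. apply Ropp_le_cancel. apply (Un_cv_le (fun n => - u n)).
  - now apply CV_opp.
  - intros n. specialize (Hb n). lra.
Qed.

Lemma Cconv_unique u l1 l2 : Cconv u l1 -> Cconv u l2 -> l1 = l2.
Proof. intros [Hr1 Hi1] [Hr2 Hi2]. apply Cpx_ext; eapply UL_sequence; eauto. Qed.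

Lemma Cconv_tail u v l N : (forall n, (N <= n)%nat -> u n = v n) -> Cconv u l -> Cconv v l.
Proof.
  intros Huv [Hr Hi]; split; eapply (Un_cv_tail _ _ _ N); eauto;
  intros n Hn; simpl; now rewrite Huv.
Qed.

Lemma Cconv_ext u v l : (forall n, u n = v n) -> Cconv u l -> Cconv v l.
Proof. intros Huv. apply (Cconv_tail u v l 0). auto. Qed.

Lemma Cconv_const a : Cconv (fun _ => a) a.
Proof. split; apply Un_cv_const. Qed.

Lemma Cconv_eventually u a N : (forall n, (N <= n)%nat -> u n = a) -> Cconv u a.
Proof.
  intros Hu. apply (Cconv_tail (fun _ => a) u a N); [|apply Cconv_const].
  intros n Hn. now rewrite Hu.
Qed.

Lemma Cconv_add u v a b : Cconv u a -> Cconv v b -> Cconv (fun n => Cadd (u n) (v n)) (Cadd a b).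
Proof. intros [Hur Hui] [Hvr Hvi]; split; simpl; now apply CV_plus. Qed.

Lemma Cconv_cmul c u a : Cconv u a -> Cconv (fun n => Cmul c (u n)) (Cmul c a).
Proof.
  intros [Hr Hi]; split; simpl;
  [apply CV_minus | apply CV_plus]; apply CV_mult; auto; apply Un_cv_const.
Qed.

Lemma Cconv_conj u a : Cconv u a -> Cconv (fun n => Cconj (u n)) (Cconj a).
Proof. intros [Hr Hi]; split; simpl; [exact Hr | now apply CV_opp in Hi]. Qed.

Definition hconv {X : Hilbert} (u : nat -> X) (l : X) : Prop :=
  forall eps, 0 < eps -> exists N, forall n, (N <= n)%nat -> hnorm (hsub X (u n) l) < eps.

Lemma hconv_weak {X : Hilbert} (u : nat -> X) l z :
  hconv u l -> Cconv (fun n => hinner (u n) z) (hinner l z).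
Proof.
  intros Hu. set (K := (1 + cre (hinner z z)) / 2 + 1).
  pose proof (hinner_pos X z) as Hz.
  assert (HK : 0 < K) by (unfold K; lra).
  assert (Hsplit : forall n, hinner (u n) z = Cadd (hinner (hsub X (u n) l) z) (hinner l z)).
  { intros n; unfold hsub. rewrite hinner_add_l, ip_opp_l. Cpx_ring. }
  assert (Hsmall : forall n eps, hnorm (hsub X (u n) l) < eps / K ->
    Rabs (cre (hinner (hsub X (u n) l) z)) < eps /\ Rabs (cim (hinner (hsub X (u n) l) z)) < eps).
  { intros n eps Hn. set (d := hsub X (u n) l) in *.
    pose proof (hnorm_ge0 X d) as Hd.
    apply (Rmult_lt_compat_r K) in Hn; [|lra].
    replace (eps / K * K) with eps in Hn by (field; lra).
    assert (hnorm d * (1 + cre (hinner z z)) / 2 <= hnorm d * K)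
      by (unfold K, Rdiv; rewrite Rmult_assoc; apply Rmult_le_compat_l; lra).
    pose proof (ip_re_bound X d z). pose proof (ip_im_bound X d z). split; lra. }
  split; intros eps Heps; destruct (Hu (eps / K)) as [N HN];
    try (apply Rdiv_lt_0_compat; lra);
    exists N; intros n Hn; unfold Rdist; rewrite Hsplit; simpl;
    destruct (Hsmall n eps (HN n Hn)) as [Hre Him].
  - now replace (cre (hinner (hsub X (u n) l) z) + cre (hinner l z) - cre (hinner l z))
      with (cre (hinner (hsub X (u n) l) z)) by ring.
  - now replace (cim (hinner (hsub X (u n) l) z) + cim (hinner l z) - cim (hinner l z))
      with (cim (hinner (hsub X (u n) l) z)) by ring.
Qed.

(** * Orthonormal families: Bessel's inequality and convergent expansions *)

Definition orthonormal {X : Hilbert} (f : nat -> X) : Prop :=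
  forall i j, hinner (f i) (f j) = if Nat.eqb i j then C1 else C0.

Section Orthonormal.
Variable X : Hilbert.
Variable f : nat -> X.
Hypothesis f_on : orthonormal f.

Definition expansion (b : nat -> Cpx) (N : nat) : X := vsum (fun k => hscal (b k) (f k)) N.
Definition mass (b : nat -> Cpx) (N : nat) : R := rsum (fun k => Cnorm2 (b k)) N.

Lemma mass_mono b m n : (m <= n)%nat -> mass b m <= mass b n.
Proof. intros Hmn; apply rsum_mono; auto. intros; apply Cnorm2_ge0. Qed.

Lemma expansion_coef b N j : hinner (expansion b N) (f j) = if Nat.ltb j N then b j else C0.
Proof.
  unfold expansion. rewrite ip_vsum_l, (csum_delta _ j).
  - destruct (Nat.ltb j N); auto. rewrite hinner_scal_l, f_on, Nat.eqb_refl. Cpx_ring.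
  - intros i Hij. rewrite hinner_scal_l, f_on. apply Nat.eqb_neq in Hij. rewrite Hij. Cpx_ring.
Qed.

Lemma expansion_ip b N z : hinner (expansion b N) z = csum (fun k => Cmul (b k) (hinner (f k) z)) N.
Proof. unfold expansion. rewrite ip_vsum_l. apply csum_ext; intros. apply hinner_scal_l. Qed.

Lemma expansion_re_ip b m n : cre (hinner (expansion b m) (expansion b n)) = mass b (Nat.min m n).
Proof.
  rewrite expansion_ip, csum_re. unfold mass. rewrite <- rsum_trunc. apply rsum_ext; intros.
  rewrite ip_conj, expansion_coef. destruct (Nat.ltb i n); simpl; unfold Cnorm2; ring.
Qed.

(** [|V_m - V_n|^2 = |mass m - mass n|]: partial sums are Cauchy iff masses are. *)
Lemma expansion_dist b m n :
  cre (hinner (hsub X (expansion b m) (expansion b n)) (hsub X (expansion b m) (expansion b n)))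
  = Rabs (mass b m - mass b n).
Proof.
  unfold hsub. rewrite hinner_add_l, !ip_opp_l, !ip_add_r, !ip_opp_r. simpl.
  rewrite !expansion_re_ip, !Nat.min_id.
  destruct (Nat.le_ge_cases m n) as [Hmn|Hnm].
  - rewrite (Nat.min_l m n), (Nat.min_r n m) by lia. pose proof (mass_mono b m n Hmn).
    rewrite Rabs_left1; lra.
  - rewrite (Nat.min_r m n), (Nat.min_l n m) by lia. pose proof (mass_mono b n m Hnm).
    rewrite Rabs_right; lra.
Qed.

Lemma bessel x N : mass (fun k => hinner x (f k)) N <= cre (hinner x x).
Proof.
  set (b := fun k => hinner x (f k)). set (T := expansion b N).
  pose proof (hinner_pos X (hadd x (hopp T))) as Hpos.
  rewrite hinner_add_l, !ip_opp_l, !ip_add_r, !ip_opp_r in Hpos. simpl in Hpos.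
  assert (HxT : cre (hinner x T) = mass b N).
  { unfold T, expansion. rewrite ip_vsum_r, csum_re. apply rsum_ext; intros.
    rewrite ip_scal_r. unfold b. simpl. unfold Cnorm2; ring. }
  assert (HTx : cre (hinner T x) = mass b N) by (rewrite ip_conj; exact HxT).
  assert (HTT : cre (hinner T T) = mass b N) by (unfold T; now rewrite expansion_re_ip, Nat.min_id).
  lra.
Qed.

Lemma expansion_converges b :
  (forall eps, 0 < eps -> exists N, forall m n, (N <= n)%nat -> (n <= m)%nat ->
     mass b m - mass b n < eps) ->
  exists l, hconv (expansion b) l.
Proof.
  intros Hc. apply (hcomplete X (expansion b)). intros eps Heps.
  destruct (Hc (eps * eps)) as [N HN]; [nra|]. exists N. intros m n Hm Hn.
  fold (hsub X (expansion b m) (expansion b n)). rewrite expansion_dist.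
  rewrite <- (sqrt_square eps) by lra. apply sqrt_lt_1_alt. split; [apply Rabs_pos|].
  destruct (Nat.le_ge_cases m n) as [Hmn|Hnm].
  - rewrite Rabs_left1; [pose proof (HN n m Hm Hmn); lra|].
    pose proof (mass_mono b m n Hmn); lra.
  - rewrite Rabs_right; [pose proof (HN m n Hn Hnm); lra|].
    pose proof (mass_mono b n m Hnm); lra.
Qed.

End Orthonormal.

Section SquareRoot.
Variable X : Hilbert.

(** If [A = B^{1/2}] and [B f = lam^2 f] with [lam > 0], [f <> 0], then [lam] is an
    eigenvalue of [A]: the vector [A f + lam f] is a nonzero eigenvector. *)
Lemma sqrt_eigvec (A B : X -> X) (v : X) lam :
  pos_sqrt_of A B -> 0 < lam -> cre (hinner v v) = 1 ->
  B v = hscal (RtoC (lam * lam)) v ->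
  exists w, A w = hscal (RtoC lam) w /\ cre (hinner w w) = 1.
Proof.
  intros [A_lin [_ [A_pos A_sq]]] Hlam Hv HBv.
  set (u := hadd (A v) (hscal (RtoC lam) v)).
  assert (Au : A u = hscal (RtoC lam) u).
  { unfold u. rewrite lin_add, lin_scal, A_sq, HBv by exact A_lin.
    apply ip_ext; intros z. rewrite !hinner_add_l, !hinner_scal_l, hinner_add_l, hinner_scal_l.
    Cpx_ring. }
  assert (Hu_v : lam <= cre (hinner u v)).
  { unfold u. rewrite hinner_add_l, hinner_scal_l. simpl. rewrite (ip_self_real X v), Hv.
    simpl. pose proof (A_pos v). lra. }
  assert (Huu : 0 < cre (hinner u u)).
  { destruct (Rle_lt_or_eq_dec 0 _ (hinner_pos X u)) as [Hlt|Heq]; auto. exfalso.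
    assert (Hz : u = hzero) by (apply hinner_def; rewrite ip_self_real, <- Heq; Cpx_ring).
    rewrite Hz, ip_zero_l in Hu_v. simpl in Hu_v. lra. }
  set (nu := sqrt (cre (hinner u u))).
  assert (Hnu : 0 < nu) by (apply sqrt_lt_R0; lra).
  assert (Hnu2 : nu * nu = cre (hinner u u)) by (apply sqrt_sqrt; lra).
  exists (hscal (RtoC (/ nu)) u). split.
  - rewrite lin_scal, Au, !hscal_mul by exact A_lin. f_equal. Cpx_ring.
  - rewrite hinner_scal_l, ip_scal_r, ip_self_real. simpl. rewrite <- Hnu2. field. lra.
Qed.

Lemma eigen_seq_hits (A : X -> X) s (w : X) r :
  eigen_seq A s -> 0 < r -> A w = hscal (RtoC r) w -> cre (hinner w w) = 1 ->
  exists n, s n = r.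
Proof.
  intros [_ [_ Hmult]] Hr Hw Hww.
  destruct (proj2 (Hmult r Hr 1%nat)) as [idx [Hlen [_ Hall]]].
  - exists (w :: nil). split; [reflexivity|]. split.
    + intros u [<-|[]]. exact Hw.
    + intros i j Hi Hj. simpl in Hi, Hj. destruct i, j; try lia. simpl.
      rewrite ip_self_real, Hww. Cpx_ring.
  - destruct idx as [|n t]; simpl in Hlen; [lia|]. exists n. now inversion Hall.
Qed.

End SquareRoot.

Lemma antitone_covering_dominates (s c : nat -> R) :
  (forall n, s (S n) <= s n) -> (forall k, c (S k) < c k) ->
  (forall k, exists n, s n = c k) -> forall k, c k <= s k.
Proof.
  intros s_dec c_dec Hhit.
  assert (s_anti : forall m n, (m <= n)%nat -> s n <= s m).
  { intros m n Hmn; induction Hmn as [|n _ IH]; [lra|]. pose proof (s_dec n); lra. }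
  destruct (choice _ Hhit) as [g Hg].
  assert (g_incr : forall k, (g k < g (S k))%nat).
  { intros k. destruct (Nat.lt_ge_cases (g k) (g (S k))) as [|Hge]; auto.
    pose proof (s_anti _ _ Hge). rewrite !Hg in *. pose proof (c_dec k). lra. }
  assert (g_ge : forall k, (k <= g k)%nat) by (induction k; [lia|]; pose proof (g_incr k); lia).
  intros k. rewrite <- Hg. apply s_anti, g_ge.
Qed.

(** * Subsequences: Bolzano-Weierstrass and diagonal extraction *)

Definition strictly_increasing (s : nat -> nat) : Prop := forall n, (s n < s (S n))%nat.

Lemma strictly_increasing_ge s : strictly_increasing s -> forall n, (n <= s n)%nat.
Proof. intros Hs n; induction n as [|n IH]; [lia|]. pose proof (Hs n); lia. Qed.

Lemma strictly_increasing_lt s : strictly_increasing s -> forall m n, (m < n)%nat -> (s m < s n)%nat.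
Proof. intros Hs m n Hmn; induction Hmn as [|n _ IH]; [apply Hs|]. pose proof (Hs n); lia. Qed.

Lemma strictly_increasing_comp s t :
  strictly_increasing s -> strictly_increasing t -> strictly_increasing (fun n => s (t n)).
Proof. intros Hs Ht n. now apply strictly_increasing_lt. Qed.

Definition Rcauchy (u : nat -> R) : Prop :=
  forall eps, 0 < eps -> exists N, forall m n, (N <= m)%nat -> (N <= n)%nat -> Rabs (u m - u n) < eps.

Lemma Un_cv_Rcauchy u l : Un_cv u l -> Rcauchy u.
Proof.
  intros Hu eps Heps. destruct (Hu (eps / 2)) as [N HN]; [lra|]. exists N; intros m n Hm Hn.
  pose proof (HN m Hm) as Hum. pose proof (HN n Hn) as Hun. unfold Rdist in *.
  replace (u m - u n) with ((u m - l) - (u n - l)) by ring.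
  eapply Rle_lt_trans; [apply Rabs_triang|]. rewrite Rabs_Ropp. lra.
Qed.

Lemma Rcauchy_sub u s : strictly_increasing s -> Rcauchy u -> Rcauchy (fun n => u (s n)).
Proof.
  intros Hs Hu eps Heps. destruct (Hu eps Heps) as [N HN]. exists N; intros m n Hm Hn.
  apply HN; [pose proof (strictly_increasing_ge s Hs m) | pose proof (strictly_increasing_ge s Hs n)]; lia.
Qed.

(** Bolzano-Weierstrass: a bounded real sequence has a Cauchy subsequence.  From a
    cluster point [l], pick indices [s n] increasing with [|u (s n) - l| < 1/(n+1)]. *)
Lemma bolzano_weierstrass u B : (forall n, Rabs (u n) <= B) ->
  exists s, strictly_increasing s /\ Rcauchy (fun n => u (s n)).
Proof.
  intros Hb.
  destruct (Bolzano_Weierstrass u (fun x => -B <= x <= B) (compact_P3 (-B) B)) as [l Hl].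
  { intros n. specialize (Hb n). pose proof (Rle_abs (u n)). pose proof (Rle_abs (- u n)).
    rewrite Rabs_Ropp in *. lra. }
  assert (Hnear : forall N n, exists m, (N <= m)%nat /\ Rabs (u m - l) < / (INR n + 1)).
  { intros N n. assert (Hpos : 0 < / (INR n + 1)) by (apply Rinv_0_lt_compat; pose proof (pos_INR n); lra).
    destruct (Hl (fun y => Rabs (y - l) < / (INR n + 1)) N) as [m [Hm1 Hm2]].
    - exists (mkposreal _ Hpos). intros y Hy. exact Hy.
    - now exists m. }
  destruct (choice (fun Nn m => (fst Nn <= m)%nat /\ Rabs (u m - l) < / (INR (snd Nn) + 1)))
    as [g Hg]; [intros [N n]; apply Hnear|].
  set (s := fix s n := match n with O => g (O, O) | S k => g (S (s k), S k) end).
  exists s. split.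
  - intros n. simpl. destruct (Hg (S (s n), S n)) as [Hge _]. simpl in Hge. lia.
  - apply (Un_cv_Rcauchy _ l). intros eps Heps.
    destruct (archimed (/ eps)) as [Hup _].
    assert (0 <= IZR (up (/ eps))) by (pose proof (Rinv_0_lt_compat eps Heps); lra).
    exists (Z.to_nat (up (/ eps))). intros n Hn. unfold Rdist.
    assert (Hsn : Rabs (u (s n) - l) < / (INR n + 1)) by (destruct n; apply Hg).
    eapply Rlt_le_trans; [exact Hsn|].
    apply le_INR in Hn. rewrite INR_IZR_INZ, Z2Nat.id in Hn by (apply le_IZR; lra).
    rewrite <- (Rinv_inv eps). apply Rinv_le_contravar; [apply Rinv_0_lt_compat; auto | lra].
Qed.

Definition Ccauchy (w : nat -> Cpx) : Prop := Rcauchy (fun n => cre (w n)) /\ Rcauchy (fun n => cim (w n)).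

Lemma bolzano_weierstrass_C w B : (forall n, Rabs (cre (w n)) <= B /\ Rabs (cim (w n)) <= B) ->
  exists s, strictly_increasing s /\ Ccauchy (fun n => w (s n)).
Proof.
  intros Hb. destruct (bolzano_weierstrass (fun n => cre (w n)) B) as [s1 [Hs1 Hre]]; [apply Hb|].
  destruct (bolzano_weierstrass (fun n => cim (w (s1 n))) B) as [s2 [Hs2 Him]]; [intros; apply Hb|].
  exists (fun n => s1 (s2 n)). split; [now apply strictly_increasing_comp|].
  split; [|exact Him]. now apply (Rcauchy_sub (fun n => cre (w (s1 n)))).
Qed.

Section Diagonal_extraction.
Variable a : nat -> nat -> Cpx.
Hypothesis a_bounded : forall k, exists B, forall n, Rabs (cre (a k n)) <= B /\ Rabs (cim (a k n)) <= B.

Lemma refine_exists (psi : nat -> nat) k :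
  exists t, strictly_increasing t /\ Ccauchy (fun n => a k (psi (t n))).
Proof. destruct (a_bounded k) as [B HB]. apply (bolzano_weierstrass_C (fun n => a k (psi n)) B). auto. Qed.

Definition refine psi k : nat -> nat := proj1_sig (constructive_indefinite_description _ (refine_exists psi k)).

Lemma refine_spec psi k : strictly_increasing (refine psi k) /\ Ccauchy (fun n => a k (psi (refine psi k n))).
Proof. unfold refine. destruct (constructive_indefinite_description _ _); auto. Qed.

(** [nested K] makes [a 0, ..., a (K-1)] Cauchy. *)
Fixpoint nested (K : nat) : nat -> nat :=
  match K with O => fun n => n | S K' => fun n => nested K' (refine (nested K') K' n) end.

Lemma nested_incr K : strictly_increasing (nested K).
Proof.
  induction K as [|K IH]; intros n; simpl; [lia|].
  apply strictly_increasing_lt; auto. apply refine_spec.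
Qed.

Lemma nested_sub K d : exists t, (forall n, (n <= t n)%nat) /\ forall n, nested (K + d) n = nested K (t n).
Proof.
  induction d as [|d [t [Ht1 Ht2]]].
  - exists (fun n => n). split; intros; [auto|]. now rewrite Nat.add_0_r.
  - exists (fun n => t (refine (nested (K + d)) (K + d) n)). split.
    + intros n. pose proof (strictly_increasing_ge _ (proj1 (refine_spec (nested (K + d)) (K + d))) n).
      pose proof (Ht1 (refine (nested (K + d)) (K + d) n)). lia.
    + intros n. rewrite Nat.add_succ_r. simpl. apply Ht2.
Qed.

Definition diagonal n := nested (S n) n.

Lemma diagonal_incr : strictly_increasing diagonal.
Proof.
  intros n. unfold diagonal.
  change (nested (S n) n < nested (S n) (refine (nested (S n)) (S n) (S n)))%nat.
  pose proof (strictly_increasing_ge _ (proj1 (refine_spec (nested (S n)) (S n))) (S n)).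
  apply strictly_increasing_lt; [apply nested_incr | lia].
Qed.

Lemma diagonal_cauchy k : Ccauchy (fun n => a k (diagonal n)).
Proof.
  destruct (refine_spec (nested k) k) as [_ [Hre Him]].
  assert (Htail : forall n, (S k <= n)%nat -> exists t, (n <= t)%nat /\ diagonal n = nested (S k) t).
  { intros n Hn. destruct (nested_sub (S k) (n - k)) as [t [Ht1 Ht2]].
    exists (t n). split; auto. unfold diagonal. rewrite <- Ht2. f_equal. lia. }
  split; intros eps Heps; [destruct (Hre eps Heps) as [N HN] | destruct (Him eps Heps) as [N HN]];
  exists (N + S k)%nat; intros m n Hm Hn;
  destruct (Htail m ltac:(lia)) as [tm [Htm1 Htm2]]; destruct (Htail n ltac:(lia)) as [tn [Htn1 Htn2]];
  rewrite Htm2, Htn2; apply HN; lia.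
Qed.

End Diagonal_extraction.

Lemma Ccauchy_uniform (u : nat -> nat -> Cpx) K d :
  (forall k, Ccauchy (u k)) -> 0 < d ->
  exists N, forall m n, (N <= m)%nat -> (N <= n)%nat ->
    forall k, (k < K)%nat -> Cnorm2 (Cadd (u k m) (Copp (u k n))) < d.
Proof.
  intros Hu Hd. induction K as [|K [N1 HN1]].
  - exists O. intros; lia.
  - set (e := sqrt (d / 2)).
    assert (He : 0 < e) by (apply sqrt_lt_R0; lra).
    assert (Hee : e * e = d / 2) by (apply sqrt_sqrt; lra).
    destruct (Hu K) as [Hre Him]. destruct (Hre e He) as [N2 HN2]. destruct (Him e He) as [N3 HN3].
    exists (N1 + N2 + N3)%nat. intros m n Hm Hn k Hk.
    destruct (Nat.eq_dec k K) as [->|HkK]; [|apply HN1; lia].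
    pose proof (HN2 m n ltac:(lia) ltac:(lia)) as Hr. pose proof (HN3 m n ltac:(lia) ltac:(lia)) as Hi.
    apply Rabs_def2 in Hr. apply Rabs_def2 in Hi. unfold Cnorm2; simpl. nra.
Qed.

(** * The diagonal operator [D x = sum_k c_k <x,f_k> f_k] *)

Section Diagonal.
Variable X : Hilbert.
Variable f : nat -> X.
Hypothesis f_on : orthonormal f.
Variable c : nat -> R.
Hypothesis c_pos : forall k, 0 < c k.
Hypothesis c_decr : forall k, c (S k) < c k.
Hypothesis c_lim : Un_cv c 0.

Lemma c_antitone m n : (m <= n)%nat -> c n <= c m.
Proof. induction 1 as [|n _ IH]; [lra|]. pose proof (c_decr n); lra. Qed.

Lemma c_inj m n : c m = c n -> m = n.
Proof.
  intros Hmn. destruct (Nat.lt_total m n) as [Hlt|[Heq|Hlt]]; auto;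
  pose proof (c_antitone _ _ Hlt); pose proof (c_decr m); pose proof (c_decr n); lra.
Qed.

Definition dcoef (x : X) k : Cpx := Cmul (RtoC (c k)) (hinner x (f k)).

Lemma dcoef_norm2 x k : Cnorm2 (dcoef x k) = c k * c k * Cnorm2 (hinner x (f k)).
Proof. unfold dcoef, Cnorm2; simpl; ring. Qed.

Lemma dcoef_mass_tail x n d :
  mass (dcoef x) (n + d) - mass (dcoef x) n <= c n * c n * cre (hinner x x).
Proof.
  unfold mass. rewrite rsum_split.
  assert (Htail : rsum (fun i => Cnorm2 (dcoef x (n + i))) d
                  <= c n * rsum (fun i => c n * Cnorm2 (hinner x (f (n + i)%nat))) d).
  { rewrite <- rsum_scal. apply rsum_le; intros i _. rewrite dcoef_norm2.
    pose proof (c_antitone n (n + i) ltac:(lia)). pose proof (c_pos (n + i)).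
    pose proof (Cnorm2_ge0 (hinner x (f (n + i)%nat))). rewrite <- Rmult_assoc.
    apply Rmult_le_compat_r; auto. nra. }
  rewrite rsum_scal in Htail.
  pose proof (bessel X f f_on x (n + d)) as Hb. unfold mass in Hb. rewrite rsum_split in Hb.
  assert (0 <= rsum (fun k => Cnorm2 (hinner x (f k))) n)
    by (apply rsum_ge0; intros; apply Cnorm2_ge0).
  pose proof (c_pos n). nra.
Qed.

(** The defining series converges: its tail masses are at most [c_n^2 |x|^2]. *)
Lemma diag_exists x : exists l, hconv (expansion X f (dcoef x)) l.
Proof.
  apply expansion_converges; auto. intros eps Heps.
  set (K := (cre (hinner x x) + 1) * c 0%nat).
  pose proof (hinner_pos X x). pose proof (c_pos 0).
  assert (HK : 0 < K) by (unfold K; nra).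
  destruct (c_lim (eps / K)) as [N HN]; [apply Rdiv_lt_0_compat; auto|].
  exists N. intros m n Hn Hnm. replace m with (n + (m - n))%nat by lia.
  eapply Rle_lt_trans; [apply dcoef_mass_tail|].
  specialize (HN n Hn). unfold Rdist in HN.
  rewrite Rminus_0_r, Rabs_right in HN by (left; apply c_pos).
  pose proof (c_antitone 0 n ltac:(lia)). pose proof (c_pos n).
  apply (Rmult_lt_compat_r K) in HN; auto. replace (eps / K * K) with eps in HN by (field; lra).
  unfold K in HN. nra.
Qed.

Definition diag (x : X) : X :=
  proj1_sig (constructive_indefinite_description _ (diag_exists x)).

Lemma diag_spec x : hconv (expansion X f (dcoef x)) (diag x).
Proof. unfold diag. destruct (constructive_indefinite_description _ _); auto. Qed.

Lemma diag_ip x z :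
  Cconv (fun N => csum (fun k => Cmul (dcoef x k) (hinner (f k) z)) N) (hinner (diag x) z).
Proof.
  eapply Cconv_ext; [|apply hconv_weak, diag_spec]. intros N. apply expansion_ip.
Qed.

Lemma diag_ip_single x z j :
  (forall k, k <> j -> Cmul (dcoef x k) (hinner (f k) z) = C0) ->
  hinner (diag x) z = Cmul (dcoef x j) (hinner (f j) z).
Proof.
  intros Hk. eapply Cconv_unique; [apply diag_ip|].
  apply (Cconv_eventually _ _ (S j)). intros n Hn.
  rewrite (csum_delta _ j n Hk). destruct (Nat.ltb_spec j n); [reflexivity | lia].
Qed.

(** Basic properties of [diag], each read off from [diag_ip] by uniqueness of limits. *)
Lemma diag_coef x j : hinner (diag x) (f j) = dcoef x j.
Proof.
  rewrite (diag_ip_single x (f j) j).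
  - rewrite f_on, Nat.eqb_refl. Cpx_ring.
  - intros k Hk. rewrite f_on. apply Nat.eqb_neq in Hk. rewrite Hk. Cpx_ring.
Qed.

Lemma diag_selfadjoint x z : hinner (diag x) z = hinner x (diag z).
Proof.
  rewrite (ip_conj _ x). eapply Cconv_unique; [apply diag_ip|].
  eapply Cconv_ext; [|apply Cconv_conj, diag_ip]. intros N. simpl. rewrite <- csum_conj.
  apply csum_ext; intros. unfold dcoef. rewrite (ip_conj _ z (f i)), (ip_conj _ (f i) x).
  Cpx_ring.
Qed.

Lemma diag_linear : linear_op diag.
Proof.
  intros a x y. apply ip_ext. intros z. rewrite hinner_add_l, hinner_scal_l.
  eapply Cconv_unique; [apply diag_ip|].
  eapply Cconv_ext; [|apply Cconv_add; [apply Cconv_cmul, diag_ip | apply diag_ip]].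
  intros N. simpl. rewrite <- csum_cmul, <- csum_add. apply csum_ext; intros.
  unfold dcoef. rewrite hinner_add_l, hinner_scal_l. Cpx_ring.
Qed.

Lemma diag_sub x y : diag (hsub X x y) = hsub X (diag x) (diag y).
Proof.
  assert (Hopp : hsub X x y = hadd (hscal (mkCpx (-1) 0) y) x).
  { apply ip_ext. intros z. unfold hsub.
    rewrite !hinner_add_l, hinner_scal_l, ip_opp_l. Cpx_ring. }
  rewrite Hopp, diag_linear. apply ip_ext. intros z. unfold hsub.
  rewrite !hinner_add_l, hinner_scal_l, ip_opp_l. Cpx_ring.
Qed.

Lemma diag_norm2 x :
  Un_cv (fun N => rsum (fun k => c k * c k * Cnorm2 (hinner x (f k))) N)
        (cre (hinner (diag x) (diag x))).
Proof.
  destruct (diag_ip x (diag x)) as [Hre _]. eapply Un_cv_ext; [|exact Hre].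
  intros N. simpl. rewrite csum_re. apply rsum_ext; intros.
  rewrite ip_conj, diag_coef. unfold dcoef, Cnorm2; simpl; ring.
Qed.

Lemma diag_positive x : 0 <= cre (hinner (diag x) x).
Proof.
  destruct (diag_ip x x) as [Hre _]. eapply Un_cv_ge; [exact Hre|].
  intros N. cbv beta. rewrite csum_re. apply rsum_ge0; intros.
  rewrite (ip_conj _ (f i) x). unfold dcoef; simpl.
  pose proof (c_pos i). pose proof (Cnorm2_ge0 (hinner x (f i))). unfold Cnorm2 in *. nra.
Qed.

Lemma diag_eigvec j : diag (f j) = hscal (RtoC (c j)) (f j).
Proof.
  apply ip_ext; intros z. rewrite hinner_scal_l, (diag_ip_single (f j) z j).
  - unfold dcoef. rewrite f_on, Nat.eqb_refl. Cpx_ring.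
  - intros k Hk. unfold dcoef. rewrite f_on. apply Nat.eqb_neq in Hk.
    rewrite (Nat.eqb_sym j k), Hk. Cpx_ring.
Qed.

Lemma diag_norm2_split x K :
  cre (hinner (diag x) (diag x))
  <= c 0%nat * c 0%nat * mass (fun k => hinner x (f k)) K + c K * c K * cre (hinner x x).
Proof.
  eapply Un_cv_le; [apply diag_norm2|]. intros N.
  pose proof (c_pos 0). pose proof (c_pos K). pose proof (hinner_pos X x).
  set (a := fun k => Cnorm2 (hinner x (f k))).
  assert (Hhead : forall M, rsum (fun k => c k * c k * a k) M <= c 0%nat * c 0%nat * mass (fun k => hinner x (f k)) M).
  { intros M. unfold mass. rewrite <- rsum_scal. apply rsum_le; intros i _.
    pose proof (c_antitone 0 i ltac:(lia)). pose proof (c_pos i). pose proof (Cnorm2_ge0 (hinner x (f i))).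
    unfold a. apply Rmult_le_compat_r; auto. nra. }
  destruct (Nat.le_gt_cases N K) as [HNK|HKN].
  - pose proof (Hhead N).
    pose proof (Rmult_le_compat_l (c 0%nat * c 0%nat) _ _ ltac:(nra)
                  (mass_mono (fun k => hinner x (f k)) N K HNK)).
    assert (0 <= c K * c K * cre (hinner x x)) by (repeat apply Rmult_le_pos; lra).
    unfold a in *. lra.
  - replace N with (K + (N - K))%nat by lia. rewrite rsum_split.
    assert (Htail : rsum (fun i => c (K + i)%nat * c (K + i)%nat * a (K + i)%nat) (N - K)
                    <= c K * c K * rsum (fun i => a (K + i)%nat) (N - K)).
    { rewrite <- rsum_scal. apply rsum_le; intros i _.
      pose proof (c_antitone K (K + i) ltac:(lia)). pose proof (c_pos (K + i)).
      pose proof (Cnorm2_ge0 (hinner x (f (K + i)%nat))).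
      unfold a. apply Rmult_le_compat_r; auto. nra. }
    pose proof (bessel X f f_on x (K + (N - K))) as Hb. unfold mass in Hb. rewrite rsum_split in Hb.
    assert (0 <= rsum a K) by (apply rsum_ge0; intros; apply Cnorm2_ge0).
    pose proof (Hhead K). unfold a in *. nra.
Qed.

Lemma diag_bounded : bounded_op diag.
Proof.
  exists (c 0%nat). intros x. pose proof (diag_norm2_split x 0) as Hb.
  unfold mass in Hb. simpl in Hb.
  unfold hnorm. rewrite <- (sqrt_square (c 0%nat)) by (left; apply c_pos).
  rewrite <- sqrt_mult; [| pose proof (c_pos 0); nra | apply hinner_pos].
  apply sqrt_le_1_alt. lra.
Qed.

Lemma scal_cancel (v : X) r : r <> 0 -> v = hscal (RtoC (/ r)) (hscal (RtoC r) v).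
Proof.
  intros Hr. rewrite hscal_mul. replace (Cmul (RtoC (/ r)) (RtoC r)) with C1.
  - now rewrite hscal_1.
  - apply Cpx_ext; simpl; field; auto.
Qed.

Lemma eigvec_coef v r k : diag v = hscal (RtoC r) v -> r <> c k -> hinner v (f k) = C0.
Proof.
  intros Hv Hrk. pose proof (diag_coef v k) as Hcoef.
  rewrite Hv, hinner_scal_l in Hcoef. unfold dcoef in Hcoef.
  pose proof (f_equal cre Hcoef) as Hre. pose proof (f_equal cim Hcoef) as Him. simpl in Hre, Him.
  apply Cpx_ext; simpl; apply Rmult_eq_reg_l with (r - c k); lra.
Qed.

Lemma eigval_in_range v r : 0 < r -> diag v = hscal (RtoC r) v -> v <> hzero ->
  exists j, c j = r.
Proof.
  intros Hr Hv Hnz. apply NNPP. intros Hnone. apply Hnz.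
  assert (Hk : forall k, r <> c k) by (intros k Hrk; apply Hnone; now exists k).
  assert (Hzero : cre (hinner (diag v) (diag v)) = 0).
  { eapply UL_sequence; [apply diag_norm2|]. eapply Un_cv_ext; [|apply Un_cv_const].
    intros N. cbv beta. transitivity (rsum (fun _ => 0) N); [rewrite rsum_const; ring|].
    apply rsum_ext; intros. rewrite (eigvec_coef v r i Hv (Hk i)). unfold Cnorm2; simpl; ring. }
  assert (Hdv : diag v = hzero) by (apply hinner_def; rewrite ip_self_real, Hzero; Cpx_ring).
  rewrite (scal_cancel v r) by lra. now rewrite <- Hv, Hdv, hscal_zero.
Qed.

Lemma eigvec_on_line v j : diag v = hscal (RtoC (c j)) v -> v = hscal (hinner v (f j)) (f j).
Proof.
  intros Hv. pose proof (c_pos j).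
  assert (Hdv : forall z, hinner (diag v) z = Cmul (dcoef v j) (hinner (f j) z)).
  { intros z. apply diag_ip_single.
    intros k Hk. unfold dcoef. rewrite (eigvec_coef v (c j) k Hv).
    - Cpx_ring.
    - intros Hjk. apply Hk. symmetry. now apply c_inj. }
  apply ip_ext; intros z. rewrite hinner_scal_l.
  rewrite (scal_cancel v (c j)) at 1 by lra. rewrite <- Hv, hinner_scal_l, Hdv.
  unfold dcoef. apply Cpx_ext; simpl; field; lra.
Qed.

Lemma Cnorm2_mul_conj a b : Cnorm2 (Cmul a (Cconj b)) = Cnorm2 a * Cnorm2 b.
Proof. unfold Cnorm2; simpl; ring. Qed.

Lemma eigvecs_at_most_one r l : 0 < r -> orthonormal_eigvecs X diag r l -> (length l <= 1)%nat.
Proof.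
  intros Hr [Heig Horth]. destruct l as [|v0 [|v1 t]]; simpl; try lia. exfalso.
  pose proof (Horth 0%nat 0%nat ltac:(simpl; lia) ltac:(simpl; lia)) as O00.
  pose proof (Horth 1%nat 1%nat ltac:(simpl; lia) ltac:(simpl; lia)) as O11.
  pose proof (Horth 0%nat 1%nat ltac:(simpl; lia) ltac:(simpl; lia)) as O01.
  simpl in O00, O11, O01.
  assert (Hv0 := Heig v0 (or_introl eq_refl)). assert (Hv1 := Heig v1 (or_intror (or_introl eq_refl))).
  destruct (eigval_in_range v0 r Hr Hv0) as [j Hj].
  { intros Hz. rewrite Hz, ip_zero_l in O00. apply (f_equal cre) in O00. simpl in O00. lra. }
  subst r. apply eigvec_on_line in Hv0. apply eigvec_on_line in Hv1.
  rewrite Hv0 in O00 at 1 2. rewrite Hv1 in O11 at 1 2. rewrite Hv0, Hv1 in O01.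
  rewrite hinner_scal_l, ip_scal_r, f_on, Nat.eqb_refl in O00, O11, O01.
  set (a0 := hinner v0 (f j)) in *. set (a1 := hinner v1 (f j)) in *.
  assert (Cnorm2 (Cmul a0 (Cconj a0)) = 1)
    by (replace (Cmul a0 (Cconj a0)) with C1 by (rewrite <- O00; Cpx_ring); unfold Cnorm2; simpl; ring).
  assert (Cnorm2 (Cmul a1 (Cconj a1)) = 1)
    by (replace (Cmul a1 (Cconj a1)) with C1 by (rewrite <- O11; Cpx_ring); unfold Cnorm2; simpl; ring).
  assert (Cnorm2 (Cmul a0 (Cconj a1)) = 0)
    by (replace (Cmul a0 (Cconj a1)) with C0 by (rewrite <- O01; Cpx_ring); unfold Cnorm2; simpl; ring).
  rewrite !Cnorm2_mul_conj in *. nra.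
Qed.

(** Both sides of the multiplicity condition in [eigen_seq diag c] say the same:
    [r] has multiplicity one if it is some [c_j], and zero otherwise. *)
Lemma index_lists_iff r k :
  (exists idx : list nat, length idx = k /\ NoDup idx /\ Forall (fun n => c n = r) idx) <->
  (k = O \/ (k = 1%nat /\ exists j, c j = r)).
Proof.
  split.
  - intros [idx [Hlen [Hnd Hall]]]. rewrite Forall_forall in Hall.
    destruct idx as [|a [|b t]]; simpl in Hlen; [left; lia| |].
    + right. split; [lia|]. exists a. apply Hall; now left.
    + exfalso. inversion Hnd as [|? ? Hab]; subst. apply Hab. left.
      apply c_inj. rewrite (Hall a), (Hall b); simpl; auto.
  - intros [Hk|[Hk [j Hj]]]; subst.
    + exists nil. repeat split; constructor.
    + exists (j :: nil). repeat constructor; auto.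
Qed.

Lemma eigvec_lists_iff r k : 0 < r ->
  (exists l : list X, length l = k /\ orthonormal_eigvecs X diag r l) <->
  (k = O \/ (k = 1%nat /\ exists j, c j = r)).
Proof.
  intros Hr. split.
  - intros [l [Hlen Hl]]. pose proof (eigvecs_at_most_one r l Hr Hl) as Hle.
    destruct l as [|v t]; simpl in Hlen; [left; lia|]. right. split; [simpl in Hle; lia|].
    destruct Hl as [Heig Horth].
    apply (eigval_in_range v r Hr (Heig v (or_introl eq_refl))).
    intros Hz. pose proof (Horth 0%nat 0%nat ltac:(simpl; lia) ltac:(simpl; lia)) as O00.
    simpl in O00. rewrite Hz, ip_zero_l in O00. apply (f_equal cre) in O00. simpl in O00. lra.
  - intros [Hk|[Hk [j Hj]]]; subst.
    + exists nil. split; auto. split; [intros v []|]. intros i j' Hi; simpl in Hi; lia.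
    + exists (f j :: nil). split; auto. split.
      * intros v [<-|[]]. apply diag_eigvec.
      * intros i j' Hi Hj'. simpl in Hi, Hj'. destruct i, j'; try lia.
        simpl. now rewrite f_on, Nat.eqb_refl.
Qed.

Lemma diag_eigen_seq : eigen_seq diag c.
Proof.
  split; [intros; left; apply c_pos|]. split; [intros; left; apply c_decr|].
  intros r Hr k. rewrite index_lists_iff, eigvec_lists_iff by exact Hr. tauto.
Qed.

Lemma adjoint_diag_eigvec Ts k : adjoint_of diag Ts ->
  Ts (diag (f k)) = hscal (RtoC (c k * c k)) (f k).
Proof.
  intros Hadj. apply ip_ext_r. intros z.
  rewrite <- Hadj, diag_eigvec, ip_scal_r, diag_coef, ip_scal_r. unfold dcoef. Cpx_ring.
Qed.

Lemma diag_singular_values_dominate s : singular_values diag s -> forall k, c k <= s k.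
Proof.
  intros [Ts [A [Hadj [Hsqrt Heig]]]].
  apply antitone_covering_dominates; [apply Heig | exact c_decr |]. intros k.
  assert (Hfk : cre (hinner (f k) (f k)) = 1) by (rewrite f_on, Nat.eqb_refl; reflexivity).
  destruct (sqrt_eigvec X A _ (f k) (c k) Hsqrt (c_pos k) Hfk (adjoint_diag_eigvec Ts k Hadj))
    as [w [Hw Hww]].
  exact (eigen_seq_hits X A s w (c k) Heig (c_pos k) Hw Hww).
Qed.

(** [diag] is self-adjoint and positive, hence its own [(D* D)^{1/2}]: its singular
    values are exactly [c]. *)
Lemma diag_singular_values : singular_values diag c.
Proof.
  exists diag, diag. split; [exact diag_selfadjoint|]. split; [|exact diag_eigen_seq].
  split; [exact diag_linear|]. split; [exact diag_selfadjoint|].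
  split; [exact diag_positive | reflexivity].
Qed.

Lemma c_sq_small B t : 0 <= B -> 0 < t -> exists K, c K * c K * B < t.
Proof.
  intros HB Ht. pose proof (c_pos 0) as Hc0. set (L := c 0%nat * B + 1).
  assert (HL : 0 < L) by (unfold L; nra).
  destruct (c_lim (t / L)) as [K HK]; [now apply Rdiv_lt_0_compat|].
  exists K. specialize (HK K (le_n _)). unfold Rdist in HK.
  rewrite Rminus_0_r, Rabs_right in HK by (left; apply c_pos).
  pose proof (c_pos K). pose proof (c_antitone 0 K ltac:(lia)).
  apply (Rmult_lt_compat_r L) in HK; auto. replace (t / L * L) with t in HK by (field; lra).
  unfold L in HK. assert (c K * c K * B <= c K * (c 0%nat * B)) by (rewrite Rmult_assoc; apply Rmult_le_compat_l; nra).
  nra.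
Qed.

Section Compactness.
Variable xs : nat -> X.
Variable M : R.
Hypothesis xs_bounded : forall n, hnorm (xs n) <= M.

Lemma xs_norm2 n : cre (hinner (xs n) (xs n)) <= M * M.
Proof. rewrite <- hnorm_sq. pose proof (xs_bounded n). pose proof (hnorm_ge0 X (xs n)). nra. Qed.

Lemma coords_bounded k n :
  Rabs (cre (hinner (xs n) (f k))) <= M /\ Rabs (cim (hinner (xs n) (f k))) <= M.
Proof.
  pose proof (bessel X f f_on (xs n) (S k)) as Hb. unfold mass in Hb. simpl in Hb.
  pose proof (rsum_ge0 (fun k0 => Cnorm2 (hinner (xs n) (f k0))) k (fun i _ => Cnorm2_ge0 _)).
  pose proof (xs_norm2 n). pose proof (xs_bounded n). pose proof (hnorm_ge0 X (xs n)).
  set (a := hinner (xs n) (f k)) in *.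
  assert (Ha : Cnorm2 a <= M * M) by lra. unfold Cnorm2 in Ha.
  assert (a_re : cre a * cre a <= M * M) by nra. assert (a_im : cim a * cim a <= M * M) by nra.
  assert (0 <= M) by lra.
  split; apply Rabs_le; split; nra.
Qed.

Lemma coords_bounded_ex k : exists B, forall n,
  Rabs (cre (hinner (xs n) (f k))) <= B /\ Rabs (cim (hinner (xs n) (f k))) <= B.
Proof. exists M. apply coords_bounded. Qed.

Definition subseq : nat -> nat := diagonal (fun k n => hinner (xs n) (f k)) coords_bounded_ex.

Lemma coords_cauchy k : Ccauchy (fun n => hinner (xs (subseq n)) (f k)).
Proof. exact (diagonal_cauchy (fun k n => hinner (xs n) (f k)) coords_bounded_ex k). Qed.

(** Along [subseq], [D xs] is Cauchy: split [|D (xs m - xs n)|^2] at [K]; the tail is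
    small since [c_K -> 0], the head since finitely many coordinates converge. *)
Lemma diag_subseq_cauchy eps : 0 < eps -> exists N, forall m n, (N <= m)%nat -> (N <= n)%nat ->
  hnorm (hsub X (diag (xs (subseq m))) (diag (xs (subseq n)))) < eps.
Proof.
  intros Heps. pose proof (c_pos 0) as Hc0.
  assert (HM : 0 <= M) by (pose proof (xs_bounded 0); pose proof (hnorm_ge0 X (xs 0%nat)); lra).
  destruct (c_sq_small (4 * M * M) (eps * eps / 2)) as [K HK]; [nra | nra |].
  set (d := eps * eps / (2 * (c 0%nat * c 0%nat * (INR K + 1)))).
  assert (Hd : 0 < d) by (unfold d; apply Rdiv_lt_0_compat; pose proof (pos_INR K); nra).
  destruct (Ccauchy_uniform (fun k n => hinner (xs (subseq n)) (f k)) K d coords_cauchy Hd) as [N HN].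
  exists N. intros m n Hm Hn. rewrite <- diag_sub.
  set (u := hsub X (xs (subseq m)) (xs (subseq n))).
  assert (Hu : cre (hinner u u) <= 4 * M * M).
  { unfold u. pose proof (ip_sub_self X (xs (subseq m)) (xs (subseq n))).
    pose proof (xs_norm2 (subseq m)). pose proof (xs_norm2 (subseq n)). lra. }
  assert (Hhead : mass (fun k => hinner u (f k)) K <= INR K * d).
  { unfold mass. rewrite <- rsum_const. apply rsum_le; intros k Hk. left.
    unfold u, hsub. rewrite hinner_add_l, ip_opp_l. now apply HN. }
  assert (Hhead' : c 0%nat * c 0%nat * mass (fun k => hinner u (f k)) K < eps * eps / 2).
  { apply Rle_lt_trans with (c 0%nat * c 0%nat * (INR K * d)); [apply Rmult_le_compat_l; nra|].
    pose proof (pos_INR K).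
    replace (c 0%nat * c 0%nat * (INR K * d)) with (eps * eps / 2 * (INR K / (INR K + 1)))
      by (unfold d; field; lra).
    assert (INR K / (INR K + 1) < 1)
      by (apply (Rmult_lt_reg_r (INR K + 1)); [lra|]; unfold Rdiv; rewrite Rmult_assoc, Rinv_l; lra).
    nra. }
  assert (Htail : c K * c K * cre (hinner u u) <= c K * c K * (4 * M * M))
    by (pose proof (c_pos K); apply Rmult_le_compat_l; nra).
  pose proof (diag_norm2_split u K).
  unfold hnorm. rewrite <- (sqrt_square eps) by lra. apply sqrt_lt_1_alt.
  split; [apply hinner_pos | lra].
Qed.

End Compactness.

Lemma diag_compact : compact_op diag.
Proof.
  intros xs [M HM]. exists (subseq xs M HM).
  destruct (hcomplete X (fun n => diag (xs (subseq xs M HM n)))) as [y Hy].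
  { intros eps Heps. destruct (diag_subseq_cauchy xs M HM eps Heps) as [N HN]. exists N. exact HN. }
  exists y. split; [apply diagonal_incr | exact Hy].
Qed.

End Diagonal.

(** * Numerical facts: the weights [c_k = (k+1)^{-1/p}] *)

Lemma INR_succ_pos k : 0 < INR k + 1.
Proof. pose proof (pos_INR k); lra. Qed.

Lemma ln_le_sub1 y : 0 < y -> ln y <= y - 1.
Proof. intros Hy. pose proof (exp_ineq1_le (ln y)). rewrite exp_ln in *; lra. Qed.

Lemma ln_div x y : 0 < x -> 0 < y -> ln (x / y) = ln x - ln y.
Proof.
  intros Hx Hy. unfold Rdiv.
  rewrite ln_mult, ln_Rinv by (auto; now apply Rinv_0_lt_compat). ring.
Qed.

Lemma harmonic_ge_ln N : ln (INR N + 1) <= rsum (fun k => / (INR k + 1)) N.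
Proof.
  induction N as [|N IH]; simpl rsum; [simpl; rewrite Rplus_0_l, ln_1; lra|].
  rewrite S_INR. pose proof (INR_succ_pos N).
  assert (ln (INR N + 1 + 1) - ln (INR N + 1) <= / (INR N + 1)).
  { rewrite <- ln_div by lra. eapply Rle_trans; [apply ln_le_sub1, Rdiv_lt_0_compat; lra|].
    right. field. lra. }
  lra.
Qed.

Lemma harmonic_unbounded B : exists N, B < rsum (fun k => / (INR k + 1)) N.
Proof.
  destruct (archimed (exp (B + 1))) as [Hup _]. pose proof (exp_pos (B + 1)).
  exists (Z.to_nat (up (exp (B + 1)))). eapply Rlt_le_trans; [|apply harmonic_ge_ln].
  assert (exp (B + 1) < INR (Z.to_nat (up (exp (B + 1)))) + 1)
    by (rewrite INR_IZR_INZ, Z2Nat.id; [lra | apply le_IZR; lra]).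
  apply exp_lt_inv. rewrite exp_ln by lra. eapply Rlt_trans; [|eassumption].
  apply exp_increasing. lra.
Qed.

(** Telescoping step [d (x+1)^{-(1+d)} <= x^{-d} - (x+1)^{-d}] (mean value for [t^{-d}]). *)
Lemma rpower_telescope_step d x : 0 < d -> 0 < x ->
  d * Rpower (x + 1) (- (1 + d)) <= Rpower x (- d) - Rpower (x + 1) (- d).
Proof.
  intros Hd Hx. unfold Rpower. set (y := x + 1).
  assert (Hy : 0 < y) by (unfold y; lra).
  set (E := exp (- d * ln y)). assert (HE : 0 < E) by apply exp_pos.
  assert (E1 : exp (- (1 + d) * ln y) = E / y).
  { unfold E. replace (- (1 + d) * ln y) with (- d * ln y + - ln y) by ring. rewrite exp_plus.
    rewrite <- ln_Rinv, exp_ln by (try apply Rinv_0_lt_compat; lra). reflexivity. }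
  assert (E2 : exp (- d * ln x) = E * exp (d * (ln y - ln x))).
  { unfold E. rewrite <- exp_plus. f_equal. ring. }
  assert (L : 1 / y <= ln y - ln x).
  { pose proof (ln_le_sub1 (x / y) ltac:(apply Rdiv_lt_0_compat; lra)) as Hl.
    rewrite ln_div in Hl by lra. assert (x / y - 1 = - (1 / y)) by (unfold y; field; lra). lra. }
  pose proof (exp_ineq1_le (d * (ln y - ln x))).
  rewrite E1, E2. fold E.
  assert (E * (1 + d * (1 / y)) <= E * exp (d * (ln y - ln x))).
  { apply Rmult_le_compat_l; [lra|].
    assert (d * (1 / y) <= d * (ln y - ln x)) by (apply Rmult_le_compat_l; lra). lra. }
  replace (d * (E / y)) with (E * (d * (1 / y))) by (field; lra). lra.
Qed.

Lemma rpower_series_bound d N : 0 < d ->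
  rsum (fun k => Rpower (INR k + 1) (- (1 + d))) N <= 1 + / d.
Proof.
  intros Hd. set (F := fun k => Rpower (INR k + 1) (- (1 + d))).
  assert (Htel : forall N, rsum F (S N) <= 1 + (1 - Rpower (INR N + 1) (- d)) / d).
  { induction N0 as [|N0 IH].
    - simpl. unfold F, Rpower. simpl INR. rewrite !Rplus_0_l.
      rewrite ln_1, !Rmult_0_r, exp_0, Rminus_diag. unfold Rdiv. rewrite Rmult_0_l. lra.
    - change (rsum F (S (S N0))) with (rsum F (S N0) + F (S N0)). unfold F at 2. rewrite S_INR.
      pose proof (rpower_telescope_step d (INR N0 + 1) Hd (INR_succ_pos N0)) as Hstep.
      set (a := Rpower (INR N0 + 1) (- d)) in *. set (b := Rpower (INR N0 + 1 + 1) (- d)) in *.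
      set (t := Rpower (INR N0 + 1 + 1) (- (1 + d))) in *.
      assert (t <= (a - b) / d)
        by (apply (Rmult_le_reg_l d); auto; replace (d * ((a - b) / d)) with (a - b) by (field; lra); lra).
      assert ((1 - b) / d = (1 - a) / d + (a - b) / d) by (field; lra). lra. }
  destruct N as [|N]; [simpl; pose proof (Rinv_0_lt_compat d Hd); lra|].
  eapply Rle_trans; [apply Htel|].
  assert (0 < Rpower (INR N + 1) (- d)) by apply exp_pos.
  pose proof (Rinv_0_lt_compat d Hd). unfold Rdiv. nra.
Qed.

Lemma rpow_pos x y : 0 < x -> rpow x y = Rpower x y.
Proof. intros Hx. unfold rpow. destruct (Rle_dec x 0); [lra | reflexivity]. Qed.

Lemma rpow_ge0 x y : 0 <= rpow x y.
Proof. unfold rpow. destruct (Rle_dec x 0); [lra | left; apply exp_pos]. Qed.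

Lemma Rpower_inv x y : 0 < x -> Rpower (/ x) y = / Rpower x y.
Proof. intros Hx. unfold Rpower. rewrite ln_Rinv, <- exp_Ropp by auto. f_equal. ring. Qed.

Section Weights.
Variable p : R.
Hypothesis p_pos : 0 < p.

Definition weight (k : nat) : R := Rpower (/ (INR k + 1)) (/ p).

Lemma weight_pos k : 0 < weight k.
Proof. apply exp_pos. Qed.

Lemma weight_decr k : weight (S k) < weight k.
Proof.
  unfold weight. pose proof (INR_succ_pos k). pose proof (INR_succ_pos (S k)).
  apply Rlt_Rpower_l; [apply Rinv_0_lt_compat; lra|]. split; [now apply Rinv_0_lt_compat|].
  apply Rinv_lt_contravar; [nra | rewrite S_INR; lra].
Qed.

Lemma weight_pow k a : Rpower (weight k) a = Rpower (INR k + 1) (- (a / p)).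
Proof.
  unfold weight. rewrite Rpower_mult, Rpower_inv by apply INR_succ_pos.
  rewrite Rpower_Ropp. do 2 f_equal. field. lra.
Qed.

Lemma weight_pow_p k : Rpower (weight k) p = / (INR k + 1).
Proof.
  rewrite weight_pow. replace (- (p / p)) with (- (1)) by (field; lra).
  rewrite Rpower_Ropp, Rpower_1 by apply INR_succ_pos. reflexivity.
Qed.

Lemma weight_lim : Un_cv weight 0.
Proof.
  intros eps Heps. set (t := Rpower eps p). assert (Ht : 0 < t) by apply exp_pos.
  destruct (archimed (/ t)) as [Hup _]. assert (0 < / t) by now apply Rinv_0_lt_compat.
  exists (Z.to_nat (up (/ t))). intros n Hn. unfold Rdist.
  rewrite Rminus_0_r, Rabs_right by (left; apply weight_pos).
  apply le_INR in Hn. rewrite INR_IZR_INZ, Z2Nat.id in Hn by (apply le_IZR; lra).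
  assert (/ (INR n + 1) < t).
  { rewrite <- (Rinv_inv t). apply Rinv_lt_contravar; [apply Rmult_lt_0_compat; auto; apply INR_succ_pos | lra]. }
  unfold weight. replace eps with (Rpower t (/ p)).
  - apply Rlt_Rpower_l; [apply Rinv_0_lt_compat; lra|]. split; auto. apply Rinv_0_lt_compat, INR_succ_pos.
  - unfold t. rewrite Rpower_mult. replace (p * / p) with 1 by (field; lra). now apply Rpower_1.
Qed.

Lemma weight_in_lp eps : 0 < eps -> in_lp (p + eps) weight.
Proof.
  intros Heps. exists (1 + / (eps / p)). intros N. rewrite sum_f_R0_rsum.
  eapply Rle_trans; [|apply (rpower_series_bound (eps / p) (S N)); apply Rdiv_lt_0_compat; lra].
  right. apply rsum_ext; intros. rewrite Rabs_right by (left; apply weight_pos).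
  rewrite rpow_pos by apply weight_pos. rewrite weight_pow. do 2 f_equal. field. lra.
Qed.

(** A sequence dominating [c] is not in [l^p]: it dominates the harmonic series. *)
Lemma dominates_weight_not_lp s : (forall k, weight k <= s k) -> ~ in_lp p s.
Proof.
  intros Hs [M HM]. destruct (harmonic_unbounded M) as [N HN].
  specialize (HM N). rewrite sum_f_R0_rsum in HM.
  assert (rsum (fun k => / (INR k + 1)) N <= rsum (fun n => rpow (Rabs (s n)) p) (S N)).
  { apply Rle_trans with (rsum (fun n => rpow (Rabs (s n)) p) N);
      [|apply rsum_mono; [intros; apply rpow_ge0 | lia]].
    apply rsum_le; intros i _. pose proof (Hs i). pose proof (weight_pos i).
    rewrite Rabs_right, rpow_pos, <- weight_pow_p by lra. apply Rle_Rpower_l; lra. }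
  lra.
Qed.

End Weights.

(** * Normalized block sums of an orthonormal family *)

Section Blocks.
Variable X : Hilbert.
Variable e : nat -> X.
Hypothesis e_on : orthonormal e.
Variable len : nat -> nat.
Hypothesis len_pos : forall k, (1 <= len k)%nat.

(** Block [k] is the index interval [[start k, start k + len k)]. *)
Fixpoint start (k : nat) : nat := match k with O => O | S k' => (start k' + len k')%nat end.

Lemma start_lt k l : (k < l)%nat -> (start k + len k <= start l)%nat.
Proof. induction 1; simpl; lia. Qed.

Lemma start_ge k : (k <= start k)%nat.
Proof. induction k as [|k IH]; simpl; auto. pose proof (len_pos k); lia. Qed.

Definition in_block j k : bool := andb (Nat.leb (start k) j) (Nat.ltb j (start k + len k)).

Lemma in_block_iff j k : in_block j k = true <-> (start k <= j < start k + len k)%nat.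
Proof. unfold in_block. rewrite Bool.andb_true_iff, Nat.leb_le, Nat.ltb_lt. tauto. Qed.

Lemma in_block_unique j k k' : in_block j k = true -> k <> k' -> in_block j k' = false.
Proof.
  intros Hjk Hkk'. apply in_block_iff in Hjk. destruct (in_block j k') eqn:Hjk'; auto.
  apply in_block_iff in Hjk'.
  destruct (Nat.lt_total k k') as [Hlt|[Heq|Hlt]]; [|lia|]; pose proof (start_lt _ _ Hlt); lia.
Qed.

Definition block_vec k : X :=
  hscal (RtoC (/ sqrt (INR (len k)))) (vsum (fun i => e (start k + i)%nat) (len k)).

Lemma sqrt_len_pos k : 0 < sqrt (INR (len k)).
Proof. apply sqrt_lt_R0, lt_0_INR. pose proof (len_pos k); lia. Qed.

Lemma ip_e_block j k :
  hinner (e j) (block_vec k) = if in_block j k then RtoC (/ sqrt (INR (len k))) else C0.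
Proof.
  unfold block_vec. rewrite ip_scal_r, ip_vsum_r, (csum_delta _ (j - start k)).
  - rewrite e_on. destruct (in_block j k) eqn:Hjk.
    + apply in_block_iff in Hjk.
      replace (Nat.ltb (j - start k) (len k)) with true by (symmetry; apply Nat.ltb_lt; lia).
      replace (Nat.eqb j (start k + (j - start k))) with true by (symmetry; apply Nat.eqb_eq; lia).
      Cpx_ring.
    + destruct (Nat.ltb_spec (j - start k) (len k)) as [Hlt|]; [|Cpx_ring].
      destruct (Nat.eqb_spec j (start k + (j - start k))) as [Heq|]; [|Cpx_ring].
      assert (in_block j k = true) by (apply in_block_iff; lia). congruence.
  - intros i Hi. rewrite e_on. destruct (Nat.eqb_spec j (start k + i)); [lia | reflexivity].
Qed.

Lemma block_orthonormal : orthonormal block_vec.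
Proof.
  intros k l. pose proof (sqrt_len_pos k) as Hk.
  unfold block_vec at 1. rewrite hinner_scal_l, ip_vsum_l.
  rewrite (csum_ext _ (fun i => if Nat.eqb k l then RtoC (/ sqrt (INR (len l))) else C0)).
  - destruct (Nat.eqb_spec k l) as [<-|]; apply Cpx_ext; simpl; rewrite ?csum_re, ?csum_im;
      simpl; rewrite rsum_const; [|ring|ring|ring].
    set (s := sqrt (INR (len k))) in *.
    replace (INR (len k)) with (s * s) by (apply sqrt_sqrt, pos_INR).
    rewrite rsum_const. field. lra.
  - intros i Hi. rewrite ip_e_block.
    destruct (Nat.eqb_spec k l) as [<-|Hkl].
    + now replace (in_block (start k + i) k) with true by (symmetry; apply in_block_iff; lia).
    + replace (in_block (start k + i) l) with false; [reflexivity|].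
      symmetry. apply (in_block_unique _ k); [apply in_block_iff; lia | exact Hkl].
Qed.

End Blocks.

(** Some integer [q >= 1] has [q^{p/2 - 1} >= 2]; blocks of length [q^k] then make the
    contribution of block [k] to [sum_n |block_op e_n|^p] at most [2^{-k}]. *)
Lemma block_base_exists p : 2 < p -> exists q, (1 <= q)%nat /\ 2 <= Rpower (INR q) (p / 2 - 1).
Proof.
  intros Hp. set (g := p / 2 - 1). assert (Hg : 0 < g) by (unfold g; lra).
  set (t := Rpower 2 (/ g)). assert (Ht : 0 < t) by apply exp_pos.
  destruct (archimed t) as [Hup _].
  assert (Hq : INR (Z.to_nat (up t)) = IZR (up t))
    by (rewrite INR_IZR_INZ, Z2Nat.id; auto; apply le_IZR; lra).
  exists (Z.to_nat (up t)). split.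
  - assert (Hlt : INR 0 < INR (Z.to_nat (up t))) by (simpl; lra). apply INR_lt in Hlt. lia.
  - rewrite Hq. replace 2 with (Rpower t g).
    + apply Rle_Rpower_l; lra.
    + unfold t. rewrite Rpower_mult. replace (/ g * g) with 1 by (field; lra). apply Rpower_1; lra.
Qed.

Section Construction.
Variable X : Hilbert.
Variable e : nat -> X.
Hypothesis e_on : orthonormal e.
Variable p : R.
Hypothesis p_gt2 : 2 < p.
Variable q : nat.
Hypothesis q_pos : (1 <= q)%nat.
Hypothesis q_big : 2 <= Rpower (INR q) (p / 2 - 1).

Let p_pos : 0 < p := Rlt_trans 0 2 p Rlt_0_2 p_gt2.

Definition len (k : nat) : nat := (q ^ k)%nat.

Lemma len_pos k : (1 <= len k)%nat.
Proof. unfold len. induction k as [|k IH]; simpl; nia. Qed.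

Definition block_op : X -> X :=
  diag X (block_vec X e len) (block_orthonormal X e e_on len len_pos)
    (weight p) (weight_pos p) (weight_decr p p_pos) (weight_lim p p_pos).

(** Common value of [|block_op e_j|] on block [k]. *)
Definition block_norm (k : nat) : R := weight p k / sqrt (INR (len k)).

Lemma block_norm_pos k : 0 < block_norm k.
Proof. apply Rdiv_lt_0_compat; [apply weight_pos | apply sqrt_len_pos, len_pos]. Qed.

Lemma block_op_e_norm j k : in_block len j k = true -> hnorm (block_op (e j)) = block_norm k.
Proof.
  intros Hjk. unfold hnorm. pose proof (block_norm_pos k).
  rewrite <- (sqrt_square (block_norm k)) by lra. f_equal.
  eapply UL_sequence; [apply diag_norm2|].
  apply (Un_cv_tail (fun _ => block_norm k * block_norm k) _ _ (S k)); [|apply Un_cv_const].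
  intros n Hn. rewrite (rsum_delta _ k).
  - destruct (Nat.ltb_spec k n); [|lia].
    rewrite ip_e_block, Hjk by exact e_on. unfold block_norm, Cnorm2; simpl.
    pose proof (sqrt_len_pos len len_pos k). field. lra.
  - intros i Hik. rewrite ip_e_block by exact e_on.
    rewrite (in_block_unique len j k i Hjk (not_eq_sym Hik)). unfold Cnorm2; simpl; ring.
Qed.

(** Block [k] contributes [q^k (c_k q^{-k/2})^p = q^{-k(p/2-1)}/(k+1) <= 2^{-k}]. *)
Lemma block_contribution k : INR (len k) * Rpower (block_norm k) p <= (/ 2) ^ k.
Proof.
  set (n := INR (len k)).
  assert (Hn : 0 < n) by (unfold n; apply lt_0_INR; pose proof (len_pos k); lia).
  pose proof (sqrt_len_pos len len_pos k). pose proof (weight_pos p k).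
  assert (Hq : 0 < INR q) by (apply lt_0_INR; lia).
  set (g := p / 2 - 1) in *.
  assert (Hsplit : Rpower (block_norm k) p = / (INR k + 1) * / (n * Rpower n g)).
  { unfold block_norm, Rdiv. rewrite <- Rpower_mult_distr by (auto; now apply Rinv_0_lt_compat).
    rewrite weight_pow_p, Rpower_inv by auto. fold n. rewrite <- Rpower_sqrt, Rpower_mult by auto.
    replace (/ 2 * p) with (1 + g) by (unfold g; field). now rewrite Rpower_plus, Rpower_1. }
  assert (Hgrow : 2 ^ k <= Rpower n g).
  { replace (Rpower n g) with (Rpower (INR q) g ^ k).
    - apply pow_incr. lra.
    - unfold n, len. rewrite pow_INR, <- !Rpower_pow, !Rpower_mult by (auto; apply exp_pos).
      f_equal. ring. }
  assert (0 < 2 ^ k) by (apply pow_lt; lra).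
  assert (Hk : / (INR k + 1) <= 1)
    by (rewrite <- Rinv_1; apply Rinv_le_contravar; pose proof (pos_INR k); lra).
  assert (0 < / (INR k + 1)) by (apply Rinv_0_lt_compat, INR_succ_pos).
  pose proof (INR_succ_pos k). pose proof (exp_pos (g * ln n)) as Hng. fold (Rpower n g) in Hng.
  rewrite Hsplit, pow_inv.
  replace (n * (/ (INR k + 1) * / (n * Rpower n g))) with (/ (INR k + 1) * / Rpower n g)
    by (field; lra).
  assert (/ Rpower n g <= / 2 ^ k) by (apply Rinv_le_contravar; lra).
  assert (0 < / Rpower n g) by (apply Rinv_0_lt_compat; auto).
  nra.
Qed.

Lemma block_op_e_sum_blocks K :
  rsum (fun j => rpow (Rabs (hnorm (block_op (e j)))) p) (start len K)
  = rsum (fun k => INR (len k) * Rpower (block_norm k) p) K.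
Proof.
  induction K as [|K IH]; simpl; auto. rewrite rsum_split, IH. f_equal.
  rewrite (rsum_ext _ (fun _ => Rpower (block_norm K) p)); [rewrite rsum_const; ring|].
  intros i Hi. pose proof (block_norm_pos K).
  rewrite (block_op_e_norm _ K) by (apply in_block_iff; lia).
  now rewrite Rabs_right, rpow_pos by lra.
Qed.

Lemma block_op_e_in_lp : in_lp p (fun n => hnorm (block_op (e n))).
Proof.
  exists 2. intros N. rewrite sum_f_R0_rsum.
  apply Rle_trans with (rsum (fun j => rpow (Rabs (hnorm (block_op (e j)))) p) (start len (S N))).
  { apply rsum_mono; [intros; apply rpow_ge0 | apply start_ge, len_pos]. }
  rewrite block_op_e_sum_blocks.
  apply Rle_trans with (rsum (fun k => (/ 2) ^ k) (S N)); [apply rsum_le; intros; apply block_contribution|].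
  assert (Hgeom : forall K, rsum (fun k => (/ 2) ^ k) K = 2 - 2 * (/ 2) ^ K)
    by (induction K as [|K IH]; simpl rsum; [simpl; lra | rewrite IH; simpl; lra]).
  rewrite Hgeom. pose proof (pow_lt (/ 2) (S N) ltac:(lra)). lra.
Qed.

Lemma block_op_in_Sp eps : 0 < eps -> in_Sp (p + eps) block_op.
Proof.
  intros Heps. split; [apply diag_compact|].
  exists (weight p). split; [apply diag_singular_values | now apply weight_in_lp].
Qed.

Lemma block_op_not_in_Sp : ~ in_Sp p block_op.
Proof.
  intros [_ [s [Hsv Hlp]]]. revert Hlp. apply (dominates_weight_not_lp p p_pos).
  exact (diag_singular_values_dominate _ _ _ _ _ _ _ s Hsv).
Qed.

End Construction.

Theorem proposition6 (H : Hilbert) (p eps : R)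
  (Hsep : separable H) (Hinf : infinite_dimensional H)
  (Hp : 2 < p) (Heps : 0 < eps)
  (e : nat -> H) (He : orthonormal_basis e) :
  exists S : H -> H,
    linear_op S /\ bounded_op S /\
    in_Sp (p + eps) S /\ ~ in_Sp p S /\
    in_lp p (fun n => hnorm (S (e n))).
Proof.
  destruct He as [e_on _].
  destruct (block_base_exists p Hp) as [q [q_pos q_big]].
  exists (block_op H e e_on p Hp q q_pos).
  split; [apply diag_linear|]. split; [apply diag_bounded|].
  split; [now apply block_op_in_Sp|]. split; [apply block_op_not_in_Sp|].
  now apply block_op_e_in_lp.
Qed.
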